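(* Let $n\geq 5$ and let $H$ be a Hamiltonian cycle in the complete graph $K_n$. Then $G=K_n-H$ (the graph on $V(K_n)$ with edge set $E(K_n)\setminus E(H)$) is $2$-swappable.
   Context: For a graph $G$, $A\subseteq E(G)$ and $B\subseteq E(\bar G)$ (edges of the complement), $G-A+B$ denotes the graph on $V(G)$ with edge set $(E(G)\setminus A)\cup B$. $G$ is $2$-swappable if for every $e\in E(G)$ there exist $A\subseteq E(G)$ and $B\subseteq E(\bar G)$ with $e\in A$, $|A|\leq 2$, and $G\cong G-A+B$. *)

(* Simple graphs on a finite vertex type T are given by their
   edge sets: sets of 2-element subsets of T. *)
From mathcomp Require Import all_boot all_fingroup.
Set Implicit Arguments. Unset Strict Implicit. Unset Printing Implicit Defensive.

Definition complete_edges (T : finType) : {set {set T}} :=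
  [set e : {set T} | #|e| == 2].

Definition compl_edges (T : finType) (E : {set {set T}}) : {set {set T}} :=
  complete_edges T :\: E.

Definition swap_edges (T : finType) (E A B : {set {set T}}) : {set {set T}} :=
  (E :\: A) :|: B.

Definition graph_iso (T : finType) (E E' : {set {set T}}) : Prop :=
  exists f : {perm T}, forall e : {set T}, (e \in E) = ((f @: e) \in E').

Definition two_swappable (T : finType) (E : {set {set T}}) : Prop :=
  forall e, e \in E ->
    exists A B : {set {set T}},
      [/\ A \subset E, B \subset compl_edges E, e \in A, #|A| <= 2
        & graph_iso E (swap_edges E A B)].

(* edge set of the Hamiltonian cycle s(0) s(1) ... s(n-1) s(0) in K_n *)
Definition ham_cycle_edges (n : nat) (s : {perm 'I_n}) : {set {set 'I_n}} :=
  [set [set s i; s (ordS i)] | i : 'I_n].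

Definition is_ham_cycle (n : nat) (H : {set {set 'I_n}}) : Prop :=
  exists s : {perm 'I_n}, H = ham_cycle_edges s.

(* A non-edge {s p, s q} (p < q) of G = K_n - H is swapped out by a 2-opt
   move on the Hamiltonian cycle s(0) ... s(n-1): reversing the positions
   p+1, ..., q of the cycle is an involution of the vertices that maps the
   cycle edges {s p, s (p+1)} and {s q, s (q+1)} to {s p, s q} and
   {s (p+1), s (q+1)}, and every other cycle edge to a cycle edge.  Hence it
   is an isomorphism from H onto H - B + A, where A is the pair of new edges
   and B the pair of old ones, and therefore from G = K_n - H onto
   K_n - (H - B + A) = G - A + B. *)

From mathcomp Require Import all_boot all_fingroup zify.

Set Implicit Arguments.
Unset Strict Implicit.
Unset Printing Implicit Defensive.

Section EdgeSets.
Variable T : finType.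
Implicit Types (a b c d : T) (f : {perm T}) (A B C E F : {set {set T}}).

Lemma eq_set2 a b c d :
  ([set a; b] == [set c; d]) = ((a == c) && (b == d)) || ((a == d) && (b == c)).
Proof.
apply/eqP/idP => [E|]; last first.
  by case/orP=> /andP[/eqP-> /eqP->] //; rewrite setUC.
have ha : a \in [set c; d] by rewrite -E set21.
have hb : b \in [set c; d] by rewrite -E set22.
have hc : c \in [set a; b] by rewrite E set21.
have hd : d \in [set a; b] by rewrite E set22.
rewrite !inE in ha hb hc hd.
case/orP: ha => /eqP ?; case/orP: hb => /eqP ?; subst; rewrite ?eqxx ?orbT //=;
  case/orP: hc => /eqP ?; case/orP: hd => /eqP ?; subst; by rewrite ?eqxx ?orbT.
Qed.

Lemma graph_iso_compl E F :
  graph_iso E F -> graph_iso (compl_edges E) (compl_edges F).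
Proof.
case=> f Ef; exists f => e.
by rewrite /compl_edges !inE Ef card_imset //; apply: perm_inj.
Qed.

Lemma compl_edges_exchange C A B :
  B \subset C -> B \subset complete_edges T -> [disjoint A & C] ->
  compl_edges ((C :\: B) :|: A) = swap_edges (compl_edges C) A B.
Proof.
move=> /subsetP BC /subsetP BK AC; apply/setP => e.
rewrite /compl_edges /swap_edges !inE.
case: (boolP (e \in B)) => [eB | _]; last first.
  by rewrite orbF; case: (e \in A); case: (e \in C).
have eA : e \notin A by rewrite (disjointFl AC (BC e eB)).
by have := BK e eB; rewrite inE (negbTE eA) orbT => ->.
Qed.

Lemma graph_iso_exchange f C A B :
  involutive f ->
  {in B, forall e : {set T}, f @: e \in A} ->
  {in A, forall e : {set T}, f @: e \in B} ->
  {in C :\: B, forall e : {set T}, f @: e \in C} ->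
  B \subset C -> [disjoint A & C] ->
  graph_iso C ((C :\: B) :|: A).
Proof.
move=> fK fBA fAB fC /subsetP BC AC.
have ffK (e : {set T}) : f @: (f @: e) = e.
  by rewrite -imset_comp (eq_imset _ fK) imset_id.
exists f => e; rewrite !inE; apply/idP/idP => [eC | ].
  case: (boolP (e \in B)) => [eB | eNB]; first by rewrite fBA ?orbT.
  have feC : f @: e \in C by apply: fC; rewrite inE eNB.
  case: (boolP (f @: e \in B)) => [/fBA eA | _]; last by rewrite feC.
  by rewrite ffK in eA; rewrite (disjointFr AC eA) in eC.
case/orP => [feCB | /fAB eB]; last by rewrite ffK in eB; apply: BC.
by have := fC (f @: e); rewrite inE feCB ffK; apply.
Qed.

End EdgeSets.

Lemma val_ordS n (x : 'I_n) : ordS x = (if x.+1 == n then 0 else x.+1) :> nat.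
Proof.
rewrite /=; case: eqP => [->|ne]; first exact: modnn.
by rewrite modn_small // ltn_neqAle ltn_ord andbT; apply/eqP.
Qed.

Lemma ordS_neq n (i : 'I_n) : 1 < n -> ordS i != i.
Proof. by rewrite -(inj_eq (@ord_inj n)) val_ordS; case: ifP; lia. Qed.

Section SegmentReversal.
Variables (n : nat) (p q : 'I_n).

(* The default of [insubd] is never used, since p.+1 + q - x < n there. *)
Definition rev_segment (x : 'I_n) : 'I_n :=
  if p < x <= q then insubd x (p.+1 + q - x) else x.

Lemma val_rev_segment x :
  rev_segment x = (if p < x <= q then p.+1 + q - x else x) :> nat.
Proof.
rewrite /rev_segment; case: ifP => // hx; rewrite val_insubd.
by have := ltn_ord q; case: ifP => //; lia.
Qed.

Lemma rev_segmentK : involutive rev_segment.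
Proof.
move=> x; apply: ord_inj.
have := val_rev_segment x; have := val_rev_segment (rev_segment x).
move: (nat_of_ord (rev_segment (rev_segment x))) (nat_of_ord (rev_segment x)) => a b.
by do 2 case: ifP => ?; lia.
Qed.

Lemma rev_segment_p : rev_segment p = p.
Proof. by apply: ord_inj; rewrite val_rev_segment ltnn. Qed.

Hypothesis lt_pq : p < q.

Lemma rev_segment_Sp : rev_segment (ordS p) = q.
Proof.
apply: ord_inj; have := ltn_ord q.
have := val_ordS p; have := val_rev_segment (ordS p).
move: (nat_of_ord (rev_segment (ordS p))) (nat_of_ord (ordS p)) => b a.
by repeat case: ifP => ?; lia.
Qed.

Lemma rev_segment_q : rev_segment q = ordS p.
Proof. by apply: (can_inj rev_segmentK); rewrite rev_segmentK rev_segment_Sp. Qed.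

Lemma rev_segment_Sq : rev_segment (ordS q) = ordS q.
Proof.
apply: ord_inj.
have := val_ordS q; have := val_rev_segment (ordS q).
move: (nat_of_ord (rev_segment (ordS q))) (nat_of_ord (ordS q)) => b a.
by repeat case: ifP => ?; lia.
Qed.

Lemma rev_segment_adjacent x : x != p -> x != q ->
  (rev_segment (ordS x) == ordS (rev_segment x)) ||
  (rev_segment x == ordS (rev_segment (ordS x))).
Proof.
rewrite -!(inj_eq (@ord_inj n)) => /eqP xp /eqP xq.
have := ltn_ord x; have := ltn_ord q.
have := val_ordS x; have := val_rev_segment x; have := val_rev_segment (ordS x).
have := val_ordS (rev_segment x); have := val_ordS (rev_segment (ordS x)).
move: (nat_of_ord (ordS (rev_segment (ordS x)))) (nat_of_ord (ordS (rev_segment x)))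
  (nat_of_ord (rev_segment (ordS x))) (nat_of_ord (rev_segment x)) (nat_of_ord (ordS x)).
by move=> e d c b a; repeat case: ifP => ?; lia.
Qed.

End SegmentReversal.

Section HamCycle.
Variables (n : nat) (s : {perm 'I_n}).
Local Notation C := (ham_cycle_edges s).

Lemma mem_ham_cycle_edges a b :
  ([set s a; s b] \in C) = (b == ordS a) || (a == ordS b).
Proof.
apply/imsetP/idP => [[i _ /eqP] | ].
  by rewrite eq_set2 !(inj_eq perm_inj) => /orP[]/andP[/eqP-> /eqP->];
    rewrite eqxx ?orbT.
by case/orP=> /eqP->; [exists a | exists b; rewrite // setUC].
Qed.

Lemma ham_cycle_edges_sub : 1 < n -> C \subset complete_edges 'I_n.
Proof.
move=> n_gt1; apply/subsetP => _ /imsetP[i _ ->].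
by rewrite inE cards2 (inj_eq perm_inj) [i == _]eq_sym ordS_neq.
Qed.

Variables (p q : 'I_n).
Hypotheses (lt_pq : p < q) (pq_notin_C : [set s p; s q] \notin C).

Let rev_perm : {perm 'I_n} := perm (inv_inj (rev_segmentK p q)).
Let two_opt : {perm 'I_n} := (rev_perm ^ s)%g.
Let added := [set [set s p; s q]; [set s (ordS p); s (ordS q)]].
Let removed := [set [set s p; s (ordS p)]; [set s q; s (ordS q)]].

Lemma two_opt_set2 a b :
  two_opt @: [set s a; s b] = [set s (rev_segment p q a); s (rev_segment p q b)].
Proof. by rewrite imsetU1 imset_set1 !permJ !permE. Qed.

Lemma two_optK : involutive two_opt.
Proof. by move=> x; rewrite -[x](permKV s) !permJ !permE rev_segmentK. Qed.

Lemma two_opt_removed : {in removed, forall e : {set 'I_n}, two_opt @: e \in added}.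
Proof.
move=> _ /set2P[]->; rewrite two_opt_set2 !inE.
  by rewrite (rev_segment_p p q) (rev_segment_Sp lt_pq) eqxx.
by rewrite (rev_segment_q lt_pq) (rev_segment_Sq lt_pq) eqxx orbT.
Qed.

Lemma two_opt_added : {in added, forall e : {set 'I_n}, two_opt @: e \in removed}.
Proof.
move=> _ /set2P[]->; rewrite two_opt_set2 !inE.
  by rewrite (rev_segment_p p q) (rev_segment_q lt_pq) eqxx.
by rewrite (rev_segment_Sp lt_pq) (rev_segment_Sq lt_pq) eqxx orbT.
Qed.

Lemma two_opt_kept : {in C :\: removed, forall e : {set 'I_n}, two_opt @: e \in C}.
Proof.
move=> _ /setDP[/imsetP[x _ ->]]; rewrite !inE negb_or => /andP[xNp xNq].
have xp : x != p by apply: contra xNp => /eqP->.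
have xq : x != q by apply: contra xNq => /eqP->.
by rewrite two_opt_set2 mem_ham_cycle_edges rev_segment_adjacent.
Qed.

Lemma removed_sub : removed \subset C.
Proof. by apply/subsetP => _ /set2P[]->; rewrite mem_ham_cycle_edges eqxx. Qed.

Lemma added_disjoint : [disjoint added & C].
Proof.
rewrite disjoints_subset subUset !sub1set !inE pq_notin_C /=.
by rewrite mem_ham_cycle_edges !(inj_eq (@ordS_inj n)) -mem_ham_cycle_edges.
Qed.

Lemma ham_cycle_compl_swap : 1 < n ->
  exists A B : {set {set 'I_n}},
    [/\ A \subset compl_edges C, B \subset compl_edges (compl_edges C),
        [set s p; s q] \in A, #|A| <= 2
      & graph_iso (compl_edges C) (swap_edges (compl_edges C) A B)].
Proof.
move=> n_gt1.
have CK := ham_cycle_edges_sub n_gt1.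
have BK : removed \subset complete_edges 'I_n := subset_trans removed_sub CK.
have pq : p != q by apply: contraTneq lt_pq => ->; rewrite ltnn.
have AK : added \subset complete_edges 'I_n.
  rewrite subUset !sub1set !inE !cards2 !(inj_eq perm_inj).
  by rewrite (inj_eq (@ordS_inj n)) pq.
exists added, removed; split.
- by rewrite /compl_edges subsetD AK added_disjoint.
- apply/subsetP => e eB; have := subsetP BK e eB.
  by rewrite /compl_edges !inE (subsetP removed_sub) // => ->.
- by rewrite set21.
- by rewrite cards2; case: (_ != _).
rewrite -(compl_edges_exchange removed_sub BK added_disjoint).
apply/graph_iso_compl/(graph_iso_exchange two_optK two_opt_removed two_opt_added two_opt_kept).
  exact: removed_sub.
exact: added_disjoint.
Qed.

End HamCycle.

Theorem mainTheorem4 (n : nat) (H : {set {set 'I_n}}) :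
  5 <= n -> is_ham_cycle H ->
  two_swappable (complete_edges 'I_n :\: H).
Proof.
move=> n_ge5 [s ->] e; rewrite !inE => /andP[eNC /cards2P[x [y [xy e_xy]]]].
subst e.
rewrite -[x](permKV s) -[y](permKV s) (inj_eq perm_inj) in xy eNC *.
move: (s^-1 x)%g (s^-1 y)%g xy eNC => p q {x y}.
wlog lt_pq : p q / p < q => [wlog_lt pq pqNC | _ pqNC].
  case: (ltngtP p q) => [lt_pq | lt_qp | /ord_inj eq_pq]; first exact: wlog_lt.
  - by rewrite setUC; apply: wlog_lt => //; [rewrite eq_sym | rewrite setUC].
  - by rewrite eq_pq eqxx in pq.
exact: ham_cycle_compl_swap lt_pq pqNC (leq_trans _ n_ge5).
Qed.
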